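(* Let $R$ be a ring with unit. Let $\mathcal{Z} = (Z^-\xrightarrow{\zeta^-}Z\xleftarrow{\zeta^+}Z^+)$ and $\mathcal{Y}=(Y^-\xrightarrow{\upsilon^-}Y\xleftarrow{\upsilon^+}Y^+)$ be sheaves on $\mathbb{P}^1$ over $R$, and let $f\colon Z\to Y$ be a homomorphism of $R[x,x^{-1}]$-modules. Suppose that $Z^-$ is finitely generated over $R[x^{-1}]$ and $Z^+$ is finitely generated over $R[x]$, and that $\upsilon^-$ and $\upsilon^+$ are injective. Then there exist integers $k,\ell\geq 0$, an $R[x^{-1}]$-linear map $f^-\colon Z^-\to Y^-$ and an $R[x]$-linear map $f^+\colon Z^+\to Y^+$ such that $f\circ\zeta^- = x^k\upsilon^-\circ f^-$ and $f\circ\zeta^+ = x^{-\ell}\upsilon^+\circ f^+$. In particular $(f^-,f,f^+)$ is a morphism of sheaves from $\mathcal{Z}$ to the twist $\mathcal{Y}(k+\ell) = (Y^-\xrightarrow{x^k\upsilon^-}Y\xleftarrow{x^{-\ell}\upsilon^+}Y^+)$.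
   Context: Modules are right modules. A sheaf on $\mathbb{P}^1$ over $R$ is a diagram $M^- \xrightarrow{\mu^-} M \xleftarrow{\mu^+} M^+$ where $M^-$ is an $R[x^{-1}]$-module, $M$ an $R[x,x^{-1}]$-module, $M^+$ an $R[x]$-module, $\mu^-$ is $R[x^{-1}]$-linear, $\mu^+$ is $R[x]$-linear, and the adjoint maps $M^-\otimes_{R[x^{-1}]}R[x,x^{-1}]\to M$ and $M^+\otimes_{R[x]}R[x,x^{-1}]\to M$ are isomorphisms; morphisms of sheaves are triples of linear maps compatible with the structure maps. For a sheaf $\mathcal{M}$ and integer $n$, a twist $\mathcal{M}(n)$ is any sheaf $M^-\xrightarrow{x^k\mu^-}M\xleftarrow{x^{-\ell}\mu^+}M^+$ with $k+\ell=n$. *)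

From HB Require Import structures.
From mathcomp Require Import all_boot all_order all_algebra.
Set Implicit Arguments. Unset Strict Implicit. Unset Printing Implicit Defensive.
Import GRing.Theory.
Local Open Scope ring_scope.

(* Conventions:
   - a right R-module is a left R^c-module ([lmodType R^c]);
   - an R[x]-module is a right R-module with an R-linear endomorphism (action
     of x); an R[x^-1]-module is a right R-module with an R-linear
     endomorphism (action of x^-1); an R[x,x^-1]-module is a right R-module
     with an R-linear automorphism (action of x, with inverse the action of
     x^-1).  Since x is central, these are exactly the module structures. *)

(* M is finitely generated as a module over R[t], t acting by [t]:
   there are finitely many generators g_i such that every element is
   sum_i g_i * p_i(t) = sum_i sum_j (t^j g_i) * c_ij. *)
Definition fin_gen (R : pzRingType) (M : lmodType R^c) (t : {linear M -> M}) :=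
  exists (n : nat) (g : 'I_n -> M),
    forall m : M, exists (N : nat) (c : 'I_n -> 'I_N -> R^c),
      m = \sum_(i < n) \sum_(j < N) c i j *: iter j t (g i).

Record sheafP1 (R : pzRingType) := SheafP1 {
  Mm : lmodType R^c;
  M0 : lmodType R^c;
  Mp : lmodType R^c;
  xinv_m : {linear Mm -> Mm};
  x_0    : {linear M0 -> M0};
  xinv_0 : {linear M0 -> M0};
  x_p    : {linear Mp -> Mp};
  mu_m : {linear Mm -> M0};
  mu_p : {linear Mp -> M0};
  x_0K : cancel x_0 xinv_0;
  xinv_0K : cancel xinv_0 x_0;
  mu_m_lin : forall m, mu_m (xinv_m m) = xinv_0 (mu_m m);
  mu_p_lin : forall m, mu_p (x_p m) = x_0 (mu_p m);
  (* M^- (x) R[x,x^-1] -> M is an isomorphism; M^- (x) R[x,x^-1] is the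
     localization of M^- at the central element x^-1, so this says:
     kernel of mu^- = x^-1-torsion, and M = union of x^n mu^-(M^-). *)
  mu_m_ker : forall m, mu_m m = 0 <-> exists n, iter n xinv_m m = 0;
  mu_m_surj : forall y : M0, exists (n : nat) (m : Mm), y = iter n x_0 (mu_m m);
  mu_p_ker : forall m, mu_p m = 0 <-> exists n, iter n x_p m = 0;
  mu_p_surj : forall y : M0, exists (n : nat) (m : Mp), y = iter n xinv_0 (mu_p m)
}.

(* Clearing denominators.  Every element of Y is x^-n upsilon^+(y) for some
   n and y in Y^+, so f zeta^+ sends the finitely many R[x]-generators of Z^+
   into x^-n_i upsilon^+(Y^+).  With l := max n_i, the R[x]-linear map
   x^l f zeta^+ sends the generators, hence all of Z^+, into upsilon^+(Y^+),
   and as upsilon^+ is injective it factors as upsilon^+ f^+.  Exchanging x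
   and x^-1 gives f^- and k. *)
From HB Require Import structures.
From mathcomp Require Import all_boot all_order all_algebra.

Set Implicit Arguments.
Unset Strict Implicit.
Unset Printing Implicit Defensive.

Import GRing.Theory.
Local Open Scope ring_scope.

Lemma iter_morph {T U : Type} {m : T -> U} {t : T -> T} {s : U -> U} :
  {morph m : a / t a >-> s a} -> forall k, {morph m : a / iter k t a >-> iter k s a}.
Proof. by move=> mt; elim=> [//|k IH] a /=; rewrite mt IH. Qed.

Lemma iterK {T : Type} {t s : T -> T} :
  cancel t s -> forall k, cancel (iter k t) (iter k s).
Proof. by move=> tK; elim=> [//|k IH] a; rewrite iterSr /= tK IH. Qed.

Lemma iter_is_linear (R : pzRingType) (W : lmodType R^c) (t : {linear W -> W}) k :
  linear (iter k t).
Proof. by elim: k => [//|k IH] a u v /=; rewrite IH linearP. Qed.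

HB.instance Definition _ (R : pzRingType) (W : lmodType R^c) (t : {linear W -> W}) k :=
  GRing.isLinear.Build R^c W W *:%R (iter k t) (@iter_is_linear R W t k).

Section LinearLift.

Variables (R : pzRingType) (A B W : lmodType R^c).
Variables (tA : {linear A -> A}) (tB : {linear B -> B}) (tW sW : {linear W -> W}).
Variable muB : {linear B -> W}.
Hypothesis muB_morph : {morph muB : b / tB b >-> tW b}.

Lemma linear_factor_inj (h : {linear A -> W}) :
  injective muB -> (forall a, exists b, muB b = h a) ->
  exists g : {linear A -> B}, forall a, muB (g a) = h a.
Proof.
move=> muB_inj h_range.
have h_rangeb a : exists b, muB b == h a by have [b /eqP] := h_range a; exists b.
pose g a := xchoose (h_rangeb a).
have gE a : muB (g a) = h a by apply/eqP/(xchooseP (h_rangeb a)).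
have g_lin : linear g by move=> c u v; apply: muB_inj; rewrite linearP !gE linearP.
pose gL : {linear A -> B} := HB.pack g (GRing.isLinear.Build _ _ _ _ g g_lin).
by exists gL.
Qed.

Lemma fin_gen_range_iter (h : {linear A -> W}) :
  cancel sW tW -> {morph h : a / tA a >-> tW a} -> fin_gen tA ->
  (forall w, exists n b, w = iter n sW (muB b)) ->
  exists k, forall a, exists b, muB b = iter k tW (h a).
Proof.
move=> sWK h_morph [n [gen gen_span]] muB_cover.
have [nb nbE] : exists nb : 'I_n -> nat * B,
    forall i, h (gen i) = iter (nb i).1 sW (muB (nb i).2).
  suff /fin_all_exists[nb nbE] : forall i, exists p : nat * B,
      h (gen i) = iter p.1 sW (muB p.2) by exists nb.
  by move=> i; have [m [b ->]] := muB_cover (h (gen i)); exists (m, b).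
pose k := (\max_(i < n) (nb i).1)%N; exists k.
have gen_range i : muB (iter (k - (nb i).1) tB (nb i).2) = iter k tW (h (gen i)).
  have le_k : ((nb i).1 <= k)%N by exact: leq_bigmax.
  by rewrite nbE -{2}(subnK le_k) iterD (iterK sWK) (iter_morph muB_morph).
move=> a; have [N [c ->]] := gen_span a.
exists (\sum_(i < n) \sum_(j < N) c i j *: iter j tB (iter (k - (nb i).1) tB (nb i).2)).
rewrite !linear_sum; apply: eq_bigr => i _.
rewrite !linear_sum; apply: eq_bigr => j _.
by rewrite !linearZ /= (iter_morph muB_morph) gen_range (iter_morph h_morph)
  -!iterD addnC.
Qed.

Lemma linear_lift_up_to_iter (h : {linear A -> W}) :
  cancel sW tW -> cancel tW sW -> injective muB -> fin_gen tA ->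
  {morph h : a / tA a >-> tW a} -> (forall w, exists n b, w = iter n sW (muB b)) ->
  exists k (g : {linear A -> B}),
    {morph g : a / tA a >-> tB a} /\ forall a, h a = iter k sW (muB (g a)).
Proof.
move=> sWK tWK muB_inj tA_fg h_morph muB_cover.
have [k h_range] := fin_gen_range_iter sWK h_morph tA_fg muB_cover.
have [g gE] := linear_factor_inj (h := iter k tW \o h) muB_inj h_range.
exists k, g; split=> a; last by rewrite gE /= (iterK tWK).
by apply: muB_inj; rewrite muB_morph !gE /= h_morph -iterSr.
Qed.

End LinearLift.

Theorem mainTheorem6 (R : pzRingType) (Z Y : sheafP1 R)
  (f : {linear M0 Z -> M0 Y})
  (f_lin : forall z, f (x_0 Z z) = x_0 Y (f z))
  (fgm : fin_gen (xinv_m Z)) (fgp : fin_gen (x_p Z))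
  (injm : injective (mu_m Y)) (injp : injective (mu_p Y)) :
  exists (k l : nat) (fm : {linear Mm Z -> Mm Y}) (fp : {linear Mp Z -> Mp Y}),
    [/\ forall z, fm (xinv_m Z z) = xinv_m Y (fm z),
        forall z, fp (x_p Z z) = x_p Y (fp z),
        forall z, f (mu_m Z z) = iter k (x_0 Y) (mu_m Y (fm z))
      & forall z, f (mu_p Z z) = iter l (xinv_0 Y) (mu_p Y (fp z))].
Proof.
have f_inv z : f (xinv_0 Z z) = xinv_0 Y (f z) by rewrite -{2}(xinv_0K z) f_lin x_0K.
have fmu_m : {morph f \o mu_m Z : z / xinv_m Z z >-> xinv_0 Y z}.
  by move=> z /=; rewrite mu_m_lin f_inv.
have fmu_p : {morph f \o mu_p Z : z / x_p Z z >-> x_0 Y z}.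
  by move=> z /=; rewrite mu_p_lin f_lin.
have [k [fm [fm_morph fmE]]] := linear_lift_up_to_iter (@mu_m_lin _ Y)
  (@x_0K _ Y) (@xinv_0K _ Y) injm fgm fmu_m (@mu_m_surj _ Y).
have [l [fp [fp_morph fpE]]] := linear_lift_up_to_iter (@mu_p_lin _ Y)
  (@xinv_0K _ Y) (@x_0K _ Y) injp fgp fmu_p (@mu_p_surj _ Y).
by exists k, l, fm, fp; split.
Qed.
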